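(* If a subshift $X$ has infinitely many significant blocks, then for every $n\in\mathbb N$, $n\ge1$, there exists a significant block of $X$ of length $n$.
   Context: Let $\mathcal A$ be a finite alphabet and $\sigma$ the shift, $(\sigma x)_i=x_{i+1}$. For a one-sided subshift $X^+\subseteq\mathcal A^{\mathbb N}$ (nonempty, closed, $\sigma$-invariant), the natural extension is $\tilde X=\{x\in\mathcal A^{\mathbb Z}: x_px_{p+1}\dots\in X^+\ \forall p\in\mathbb Z\}$; for a two-sided subshift $X$, $X^+$ is the set of right rays of its points and $\tilde X=X$. For a block $a_{-n}\dots a_0$ occurring in $\tilde X$, $\mathrm{fol}(a_{-n}\dots a_0)=\{b_0b_1\dots\in X^+:\exists b\in\tilde X,\ b_{-n}\dots b_0=a_{-n}\dots a_0\}$. A block $a_{-n}\dots a_0$ occurring in $\tilde X$ with $n\ge1$ is a significant block of $X$ if $\mathrm{fol}(a_{-n}\dots a_0)\subsetneq\mathrm{fol}(a_{-n+1}\dots a_0)$; single symbols occurring in $\tilde X$ are also counted as significant. *)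

From mathcomp Require Import all_boot all_algebra.
Set Implicit Arguments. Unset Strict Implicit. Unset Printing Implicit Defensive.
Import GRing.Theory Num.Theory.
Local Open Scope ring_scope.

Section Subshifts.
Variable A : finType.

Definition shift2 (x : int -> A) : int -> A := fun i => x (i + 1).
Definition unshift2 (x : int -> A) : int -> A := fun i => x (i - 1).
Definition shift1 (x : nat -> A) : nat -> A := fun i => x i.+1.

(* closedness in the product topology (A discrete): a point all of whose
   finite windows agree with points of X lies in X *)
Definition closed2 (X : (int -> A) -> Prop) : Prop :=
  forall x, (forall N : nat, exists y, X y /\
              forall i : int, `|i|%N <= N -> y i = x i)%N -> X x.
Definition closed1 (X : (nat -> A) -> Prop) : Prop :=
  forall x, (forall N : nat, exists y, X y /\
              forall i : nat, (i <= N)%N -> y i = x i) -> X x.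

Definition subshift2 (X : (int -> A) -> Prop) : Prop :=
  [/\ exists x, X x, closed2 X,
      (forall x, X x -> X (shift2 x)) & (forall x, X x -> X (unshift2 x))].

Definition subshift1 (X : (nat -> A) -> Prop) : Prop :=
  [/\ exists x, X x, closed1 X & (forall x, X x -> X (shift1 x))].

Definition natext (Xp : (nat -> A) -> Prop) : (int -> A) -> Prop :=
  fun x => forall p : int, Xp (fun i : nat => x (p + i%:Z)).

Definition rays (Xt : (int -> A) -> Prop) : (nat -> A) -> Prop :=
  fun c => exists x, Xt x /\ forall i : nat, c i = x i%:Z.

(* The data (X^+, X~) attached to a subshift X, one- or two-sided. *)
Definition subshift_pair (Xp : (nat -> A) -> Prop) (Xt : (int -> A) -> Prop) :=
  (subshift2 Xt /\ Xp = rays Xt) \/ (subshift1 Xp /\ Xt = natext Xp).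

(* A block w = a_{-n} ... a_0 (size w = n+1, w`_k = a_{k-n}) sits in b at
   coordinates -n..0 *)
Definition block_at0 (b : int -> A) (w : seq A) : Prop :=
  forall k : nat, (k < size w)%N -> forall a0 : A,
    b (k%:Z - (size w).-1%:Z) = nth a0 w k.

Definition occurs_in (Xt : (int -> A) -> Prop) (w : seq A) : Prop :=
  exists b, Xt b /\ exists p : int, forall k : nat, (k < size w)%N ->
    forall a0 : A, b (p + k%:Z) = nth a0 w k.

Definition fol (Xp : (nat -> A) -> Prop) (Xt : (int -> A) -> Prop) (w : seq A)
  : (nat -> A) -> Prop :=
  fun c => Xp c /\ exists b, Xt b /\ block_at0 b w /\ forall i : nat, c i = b i%:Z.

Definition strict_subset (T : Type) (P Q : T -> Prop) : Prop :=
  (forall t, P t -> Q t) /\ exists t, Q t /\ ~ P t.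

(* significant blocks (single symbols occurring in X~ count as significant) *)
Definition significant (Xp : (nat -> A) -> Prop) (Xt : (int -> A) -> Prop)
  (w : seq A) : Prop :=
  occurs_in Xt w /\
  (size w = 1%N \/
   ((2 <= size w)%N /\ strict_subset (fol Xp Xt w) (fol Xp Xt (behead w)))).

End Subshifts.

(* A block a_{-n}...a_0 with n >= 2 whose prefix a_{-n}...a_{-1} is not
   significant is not significant either: if fol(a_{-n}..a_{-1}) equals
   fol(a_{-n+1}..a_{-1}), then extending both by the symbol a_0 (shift back,
   use the equality, shift forward) gives fol(a_{-n}..a_0) = fol(a_{-n+1}..a_0).
   Hence prefixes of significant blocks are significant.  Since there are only
   finitely many blocks of bounded length, infinitely many significant blocks
   yield arbitrarily long ones, and their prefixes give every length. *)
Set Warnings "-notation-overridden,-ambiguous-paths".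
From mathcomp Require Import all_boot all_algebra zify.
From Stdlib Require Import Classical FunctionalExtensionality.
Import GRing.Theory.
Local Open Scope ring_scope.

Section FollowerSets.
Variable A : finType.
Variables (Xp : (nat -> A) -> Prop) (Xt : (int -> A) -> Prop).

Lemma block_at0_behead (b : int -> A) (w : seq A) :
  block_at0 b w -> block_at0 b (behead w).
Proof.
case: w => [|x w] //= bw k ltkw a0.
by have /= <- := bw k.+1 ltkw a0; congr b; lia.
Qed.

Lemma fol_behead (w : seq A) c : fol Xp Xt w c -> fol Xp Xt (behead w) c.
Proof.
case=> Xpc [b [Xtb [bw cb]]]; split=> //.
by exists b; split=> //; split=> //; apply: block_at0_behead.
Qed.

Hypothesis pairX : subshift_pair Xp Xt.

Lemma subshift_shift2 x : Xt x -> Xt (shift2 x).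
Proof.
case: pairX => [[[_ _ Xsh _] _]|[_ ->]]; first exact: Xsh.
move=> Xx p; have -> : (fun i : nat => shift2 x (p + i%:Z)) =
    (fun i : nat => x ((p + 1) + i%:Z)).
  by apply: functional_extensionality => i; rewrite /shift2 addrAC.
exact: Xx.
Qed.

Lemma subshift_unshift2 x : Xt x -> Xt (unshift2 x).
Proof.
case: pairX => [[[_ _ _ Xunsh] _]|[_ ->]]; first exact: Xunsh.
move=> Xx p; have -> : (fun i : nat => unshift2 x (p + i%:Z)) =
    (fun i : nat => x ((p - 1) + i%:Z)).
  by apply: functional_extensionality => i; rewrite /unshift2 addrAC.
exact: Xx.
Qed.

Lemma subshift_ray x : Xt x -> Xp (fun i : nat => x i%:Z).
Proof.
case: pairX => [[_ ->]|[_ ->]]; first by move=> Xx; exists x.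
move=> Xx; have := Xx 0.
by have -> : (fun i : nat => x (0 + i%:Z)) = (fun i : nat => x i%:Z) by
  apply: functional_extensionality => i; rewrite add0r.
Qed.

Lemma fol_rcons_subset (v u : seq A) (a : A) :
  (forall c, fol Xp Xt v c -> fol Xp Xt u c) ->
  forall c, fol Xp Xt (rcons v a) c -> fol Xp Xt (rcons u a) c.
Proof.
move=> fol_vu c [Xpc [b [Xtb [bva cb]]]]; split=> //.
have b0 : b 0 = a.
  have := bva (size v) _ a; rewrite size_rcons nth_rcons ltnn eqxx.
  by move=> <-; [congr b; lia | by []].
have fol_v_back : fol Xp Xt v (fun i : nat => unshift2 b i%:Z).
  split; first exact/subshift_ray/subshift_unshift2.
  exists (unshift2 b); split; first exact: subshift_unshift2.
  split=> // k ltkv a0.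
  have := bva k _ a0; rewrite size_rcons nth_rcons ltkv => <-; last by lia.
  by rewrite /unshift2; congr b; lia.
have [_ [b' [Xtb' [b'u b'b]]]] := fol_vu _ fol_v_back.
exists (shift2 b'); split; first exact: subshift_shift2.
split=> [k|i].
  rewrite size_rcons ltnS leq_eqVlt => /orP [/eqP ->|ltku] a0.
    rewrite nth_rcons ltnn eqxx /shift2.
    have -> : (size u)%:Z - (size u).+1.-1%:Z + 1 = 1%:Z by lia.
    by rewrite -b'b /unshift2 -b0; congr b; lia.
  by rewrite nth_rcons ltku -(b'u k ltku a0) /shift2; congr b'; lia.
rewrite cb /shift2; have -> : i%:Z + 1 = (i.+1)%:Z by lia.
by rewrite -b'b /unshift2; congr b; lia.
Qed.

Lemma significant_prefix (v : seq A) (a : A) :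
  (1 <= size v)%N -> significant Xp Xt (rcons v a) -> significant Xp Xt v.
Proof.
move=> v_gt0 [[b [Xtb [p bva]]] sig_va]; split.
  exists b; split=> //; exists p => k ltkv a0.
  by rewrite (bva k _ a0) ?nth_rcons ?ltkv // size_rcons; lia.
case: (ltngtP (size v) 1) => szv; [lia | | by left].
right; split=> //; split; first exact: fol_behead.
apply: NNPP => no_witness.
have fol_sub : forall c, fol Xp Xt (behead v) c -> fol Xp Xt v c.
  by move=> c fc; apply: NNPP => nfc; apply: no_witness; exists c.
case: sig_va => [|[_ [_ [c [fc nfc]]]]]; first by rewrite size_rcons; lia.
apply: nfc; case: v szv fol_sub {bva no_witness v_gt0} fc => [|x v] //= _ fol_sub.
exact: fol_rcons_subset fol_sub c.
Qed.

Lemma significant_take (n : nat) (w : seq A) :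
  (1 <= n)%N -> significant Xp Xt w -> significant Xp Xt (take n w).
Proof.
move=> n_gt0; elim/last_ind: w => [|v a IHv] sig_va; first by [].
have [lenv|ltvn] := leqP n (size v); last first.
  by rewrite take_oversize // size_rcons.
rewrite -cats1 takel_cat //; apply/IHv/(@significant_prefix v a) => //.
exact: leq_trans lenv.
Qed.

End FollowerSets.

Lemma bounded_seqs_finite (A : finType) (n : nat) :
  exists s : seq (seq A), forall w, (size w <= n)%N -> w \in s.
Proof.
elim: n => [|n [s sP]]; first by exists [:: [::]] => -[].
exists ([::] :: [seq x :: w | x <- enum A, w <- s]) => -[|x w] //=.
by rewrite ltnS => /sP ws; rewrite inE; apply/orP; right;
  apply/allpairsP; exists (x, w); rewrite mem_enum.
Qed.

Theorem proposition3p10 (A : finType) (Xp : (nat -> A) -> Prop)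
  (Xt : (int -> A) -> Prop) :
  subshift_pair Xp Xt ->
  ~ (exists s : seq (seq A), forall w, significant Xp Xt w -> w \in s) ->
  forall n : nat, (1 <= n)%N ->
  exists w : seq A, size w = n /\ significant Xp Xt w.
Proof.
move=> pairX infinite_sig n n_gt0.
have [w [sig_w lenw]] : exists w, significant Xp Xt w /\ (n <= size w)%N.
  apply: NNPP => no_long; apply: infinite_sig.
  have [s sP] := bounded_seqs_finite A n.
  exists s => w sig_w; apply: sP; rewrite leqNgt; apply/negP => ltnw.
  by apply: no_long; exists w; split=> //; apply: ltnW.
exists (take n w); split; first exact: size_takel.
exact: significant_take.
Qed.
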